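(* We have $[w]_{A_\infty}'\leq c_d[w]_{A_\infty}$, where $c_d$ is a constant such that the logarithmic maximal function $M_0 f:=\sup_{Q}\exp\big(\frac{1}{|Q|}\int_Q\log|f|\big)\chi_Q$ satisfies $\|M_0f\|_{L^p}\leq c_{d}^{1/p}\|f\|_{L^p}$ for all $p\in(0,\infty)$.
   Context: Weights on $\mathbb{R}^d$, suprema over all cubes $Q$. $[w]_{A_\infty}:=\sup_Q\big(\frac{1}{|Q|}\int_Q w\big)\exp\big(\frac{1}{|Q|}\int_Q \log w^{-1}\big)$; $[w]_{A_\infty}':=\sup_Q\frac{1}{w(Q)}\int_Q M(w\chi_Q)$, $M$ the Hardy--Littlewood maximal operator. Such a dimensional $c_d$ exists (e.g. $c_d=(2C_d)^2$, $C_d$ from the $L^2$ bound of $M$; $c_d=e$ in the dyadic case). *)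

From HB Require Import structures.
From mathcomp Require Import all_boot all_order all_algebra.
From mathcomp Require Import all_classical all_reals all_analysis.
Set Implicit Arguments. Unset Strict Implicit. Unset Printing Implicit Defensive.
Import Order.TTheory GRing.Theory Num.Theory.
Local Open Scope classical_set_scope.
Local Open Scope ring_scope.

Section Defs.
Variable R : realType.

Definition vcons (n : nat) (t : R) (v : 'rV[R]_n) : 'rV[R]_n.+1 :=
  \row_(i < n.+1) (if unlift ord0 i is Some j then v ord0 j else t).

(** Lebesgue integral over R^n of a nonnegative function, computed as the
    iterated one-dimensional Lebesgue integral (Tonelli); for nonnegative
    Borel functions this is the n-dimensional Lebesgue integral. *)
Fixpoint iint (n : nat) : ('rV[R]_n -> \bar R) -> \bar R :=
  match n with
  | 0 => fun f => f 0
  | m.+1 => fun f =>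
      (\int[@lebesgue_measure R]_t iint (fun v => f (vcons t v)))%E
  end.

Variable d : nat.

Definition borel_set (A : set 'rV[R]_d) : Prop := <<s (@open 'M[R^o]_(1, d)) >> A.
Definition borel_fun (f : 'rV[R]_d -> R) : Prop :=
  forall B : set R, measurable B -> borel_set (f @^-1` B).

Definition intp (A : set 'rV[R]_d) (g : 'rV[R]_d -> \bar R) : \bar R :=
  iint (fun x => ((\1_A x)%:E * g x)%E).

Definition leb (A : set 'rV[R]_d) : \bar R := intp A (fun _ => 1%E).

Definition ints (A : set 'rV[R]_d) (g : 'rV[R]_d -> \bar R) : \bar R :=
  (intp A (g^\+) - intp A (g^\-))%E.

Definition cube (a : 'rV[R]_d) (l : R) : set 'rV[R]_d :=
  [set x | forall i, a ord0 i <= x ord0 i <= a ord0 i + l].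
Definition is_cube (Q : set 'rV[R]_d) : Prop :=
  exists a l, 0 < l /\ Q = cube a l.

Definition avgp (Q : set 'rV[R]_d) (g : 'rV[R]_d -> \bar R) : \bar R :=
  ((fine (leb Q))^-1%:E * intp Q g)%E.
Definition avgs (Q : set 'rV[R]_d) (g : 'rV[R]_d -> \bar R) : \bar R :=
  ((fine (leb Q))^-1%:E * ints Q g)%E.

Definition logabs (y : R) : \bar R :=
  if y == 0 then -oo%E else (ln `|y|)%:E.

Definition HLM (f : 'rV[R]_d -> R) (x : 'rV[R]_d) : \bar R :=
  ereal_sup [set avgp Q (fun y => (`|f y|)%:E) | Q in [set Q | is_cube Q /\ Q x]].

Definition M0 (f : 'rV[R]_d -> R) (x : 'rV[R]_d) : \bar R :=
  ereal_sup [set expeR (avgs Q (fun y => logabs (f y))) |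
               Q in [set Q | is_cube Q /\ Q x]].

Definition Lpnorm (p : R) (g : 'rV[R]_d -> \bar R) : \bar R :=
  poweR (iint (fun x => poweR (`|g x|)%E p)) p^-1.

Definition weight (w : 'rV[R]_d -> R) : Prop :=
  [/\ borel_fun w, forall x, 0 <= w x,
      forall Q, is_cube Q -> (intp Q (fun x => (w x)%:E) < +oo)%E &
      leb [set x | w x = 0] = 0%E].

(** [w]_{A_oo} (Fujii--Wilson-type / exp-log definition) *)
Definition Ainf (w : 'rV[R]_d -> R) : \bar R :=
  ereal_sup [set (avgp Q (fun x => (w x)%:E) *
                  expeR (avgs Q (fun x => (- logabs (w x))%E)))%E |
             Q in is_cube].

Definition Ainf' (w : 'rV[R]_d -> R) : \bar R :=
  ereal_sup [set ((fine (intp Q (fun x => (w x)%:E)))^-1%:E *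
                  intp Q (HLM (fun x => (w x * \1_Q x)%R)))%E |
             Q in is_cube].

End Defs.

From HB Require Import structures.
From mathcomp Require Import all_boot all_order all_algebra.
From mathcomp Require Import all_classical all_reals all_analysis.
From mathcomp Require Import measurable_realfun lra ring.
Set Implicit Arguments. Unset Strict Implicit. Unset Printing Implicit Defensive.
Import Order.TTheory GRing.Theory Num.Theory.
Local Open Scope classical_set_scope.
Local Open Scope ring_scope.

(* Fix a cube Q and a point x ∈ Q.  For a cube P ∋ x, clamping the corner of
   P into Q gives a cube P' of side min(ℓ(P), ℓ(Q)) with P ∩ Q ⊆ P' ⊆ Q, hence
   |P'| ≤ |P|.  So the average of wχ_Q over P is at most the average of w over
   P', which by the definition of [w]_{A_∞} is at most
   [w]_{A_∞} exp(avg_{P'} log w) = [w]_{A_∞} exp(avg_{P'} log(wχ_Q)).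
   Thus M(wχ_Q) ≤ [w]_{A_∞} M_0(wχ_Q) on Q; integrating over Q and using the
   case p = 1 of the hypothesis gives ∫_Q M(wχ_Q) ≤ c [w]_{A_∞} w(Q). *)

Section ge0_integral_nomeas.
Local Open Scope ereal_scope.
Context {dm} {T : measurableType dm} {R : realType}.
Variable mu : {measure set T -> \bar R}.
Import HBNNSimple.

(* No measurability is needed: for nonnegative functions both integrals are
   suprema of integrals of simple functions below them. *)
Lemma ge0_le_integralT (f g : T -> \bar R) :
  (forall x, 0 <= f x) -> (forall x, f x <= g x) ->
  \int[mu]_x f x <= \int[mu]_x g x.
Proof.
move=> f0 fg; have g0 x : 0 <= g x by exact: le_trans (fg x).
rewrite !ge0_integralTE//; apply: ereal_sup_le => _ [h hf <-].
by exists h => //= x; exact: le_trans (hf x) (fg x).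
Qed.

Lemma ge0_integralZl_leT (f : T -> \bar R) (k : R) :
  (forall x, 0 <= f x) -> (0 <= k)%R ->
  \int[mu]_x (k%:E * f x) <= k%:E * \int[mu]_x f x.
Proof.
move=> f0 k_ge0; have [->|kn0] := eqVneq k 0%R.
  have -> : (fun x => 0%:E * f x) = cst 0 by apply/funext => x; rewrite mul0e.
  by rewrite integral0 mul0e.
have k0 : (0 < k)%R by rewrite lt0r kn0.
have kf0 x : 0 <= k%:E * f x by apply: mule_ge0 => //; rewrite lee_fin.
have ki0 : (0 <= k^-1)%R by rewrite invr_ge0 ltW.
rewrite !ge0_integralTE//; apply: ge_ereal_sup => _ [h hf <-] /=.
pose h' := scale_nnsfun h ki0.
have -> : sintegral mu h = k%:E * sintegral mu h'.
  rewrite sintegralrM muleA -EFinM mulfV ?mul1e//; exact: lt0r_neq0.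
rewrite lee_pmul2l ?lte_fin//; apply: ereal_sup_ubound; exists h' => //= x.
by rewrite -(@lee_pmul2l _ k%:E) ?lte_fin// -EFinM mulrA mulfV ?mul1r ?hf// lt0r_neq0.
Qed.

End ge0_integral_nomeas.

Section iterated_integral.
Local Open Scope ereal_scope.
Variable R : realType.

Lemma iint_ge0 n (f : 'rV[R]_n -> \bar R) : (forall x, 0 <= f x) -> 0 <= iint f.
Proof.
elim: n f => [|n IH] f f0 /=; first exact: f0.
by apply: integral_ge0 => t _; apply: IH => v; exact: f0.
Qed.

Lemma le_iint n (f g : 'rV[R]_n -> \bar R) :
  (forall x, 0 <= f x) -> (forall x, f x <= g x) -> iint f <= iint g.
Proof.
elim: n f g => [|n IH] f g f0 fg /=; first exact: fg.
apply: ge0_le_integralT => t; first by apply: iint_ge0 => v; exact: f0.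
by apply: IH => v; [exact: f0 | exact: fg].
Qed.

Lemma iintZl_le n (f : 'rV[R]_n -> \bar R) (k : R) :
  (forall x, 0 <= f x) -> (0 <= k)%R -> iint (fun x => k%:E * f x) <= k%:E * iint f.
Proof.
elim: n f => [|n IH] f f0 k0 //=.
have F0 t : 0 <= iint (fun v => f (vcons t v)) by apply: iint_ge0 => v; exact: f0.
apply: (le_trans _ (ge0_integralZl_leT (@lebesgue_measure R) F0 k0)).
apply: ge0_le_integralT => t; last exact: IH.
by apply: iint_ge0 => v; apply: mule_ge0; rewrite ?lee_fin.
Qed.

Lemma iint0 n : iint (fun _ : 'rV[R]_n => 0) = 0.
Proof. by elim: n => [//|n IH] /=; rewrite IH integral0. Qed.

Definition rowtail n (a : 'rV[R]_n.+1) : 'rV[R]_n := \row_j a ord0 (lift ord0 j).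

Lemma cube_vcons n (a : 'rV[R]_n.+1) l t v :
  cube a l (vcons t v) <->
  (a ord0 ord0 <= t <= a ord0 ord0 + l)%R /\ cube (rowtail a) l v.
Proof.
rewrite /cube /vcons /rowtail; split.
  move=> H; split; first by have := H ord0; rewrite !mxE unlift_none.
  by move=> j; have := H (lift ord0 j); rewrite !mxE liftK.
move=> [Ht Hv] i; rewrite mxE; case: unliftP => [j ->|->] //.
by have := Hv j; rewrite !mxE.
Qed.

Lemma leb_cube n (a : 'rV[R]_n) l : (0 < l)%R -> leb (cube a l) = (l ^+ n)%:E.
Proof.
move=> l0; rewrite /leb /intp; elim: n a => [|n IH] a /=.
  by rewrite indicE mem_set ?mule1 // => -[].
pose I := `[a ord0 ord0, (a ord0 ord0 + l)%R]%classic.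
have -> : (fun t => iint (fun v => (\1_(cube a l) (vcons t v))%:E * 1)) =
          (fun t => (l ^+ n)%:E * (\1_I t)%:E).
  apply/funext => t; rewrite indicE.
  have [tI|tI] := boolP (t \in I).
    rewrite mule1 -(IH (rowtail a)); congr iint; apply/funext => v.
    rewrite !indicE; congr (_%:E * _); congr (_ : bool)%:R.
    apply/idP/idP => /set_mem H; apply/mem_set; first by case/cube_vcons: H.
    by apply/cube_vcons; split => //; move: tI => /set_mem; rewrite /I /= in_itv.
  rewrite mule0 -(iint0 n); congr iint; apply/funext => v.
  rewrite indicE memNset ?mul0e // => /cube_vcons [Ht _].
  by apply: (negP tI); apply/mem_set; rewrite /I /= in_itv.
rewrite ge0_integralZl_EFin; [|by []|by move=> t _; rewrite lee_fin|
  by apply/measurable_EFinP/measurable_indic; exact: measurable_itv|by rewrite exprn_ge0 ?ltW].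
rewrite integral_indic// ?setIT; last exact: measurable_itv.
have I_len := @lebesgue_measure_itv R `[a ord0 ord0, (a ord0 ord0 + l)%R].
rewrite /= lte_fin ltrDl l0 -EFinD addrAC subrr add0r in I_len.
by rewrite exprSr EFinM; congr (_ * _); exact: I_len.
Qed.

End iterated_integral.

Section borel.
Variables (R : realType) (d : nat).
Let S := g_sigma_algebraType (@open 'M[R^o]_(1, d)).

Lemma cube_closed (a : 'rV[R]_d) l : @closed 'M[R^o]_(1, d) (cube a l).
Proof.
have -> : cube a l = \bigcap_(i in setT)
    ((fun M : 'M[R^o]_(1, d) => M ord0 i) @^-1` `[a ord0 i, a ord0 i + l]).
  apply/seteqP; split => x /=; first by move=> H i _ /=; rewrite in_itv /= H.
  by move=> H i; have := H i I; rewrite /= in_itv.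
apply: closed_bigI => i _.
apply: (@continuous_closedP 'M[R^o]_(1, d) R^o _).1; first exact: coord_continuous.
exact: (@interval_closed R (BLeft _) (BRight _)).
Qed.

Lemma borel_cube (a : 'rV[R]_d) l : borel_set (cube a l).
Proof.
rewrite -[cube a l]setCK; apply: (@measurableC _ S); apply: sub_gen_smallest.
exact/closed_openC/cube_closed.
Qed.

Lemma borel_fun_mul_indic (w : 'rV[R]_d -> R) (Q : set 'rV[R]_d) :
  borel_fun w -> borel_set Q -> borel_fun (fun x => w x * \1_Q x).
Proof.
move=> bw bQ B mB; have bwB : borel_set (w @^-1` B) by exact: bw.
have [B0|B0] := pselect (B 0).
  have -> : (fun x => w x * \1_Q x) @^-1` B = (w @^-1` B `&` Q) `|` ~` Q.
    apply/seteqP; split => x /=; rewrite indicE.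
      by case: (boolP (x \in Q)) => [/set_mem xQ|/negP xQ];
        [rewrite mulr1; left|right => /mem_set].
    by case=> [[Bx xQ]|xQ]; [rewrite mem_set ?mulr1|rewrite memNset ?mulr0].
  by apply: (@measurableU _ S); [apply: (@measurableI _ S)|apply: (@measurableC _ S)].
have -> : (fun x => w x * \1_Q x) @^-1` B = w @^-1` B `&` Q.
  apply/seteqP; split => x /=; rewrite indicE.
    by case: (boolP (x \in Q)) => [/set_mem xQ|_]; rewrite ?mulr1 ?mulr0 // => /B0.
  by case=> Bx xQ; rewrite mem_set ?mulr1.
exact: (@measurableI _ S).
Qed.

End borel.

Section subcube.
Variables (R : realType) (d : nat).

Definition clamp_corner (a b : 'rV[R]_d) (l s : R) : 'rV[R]_d :=
  \row_i (if b ord0 i <= a ord0 i then a ord0 i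
          else if b ord0 i <= a ord0 i + (l - s) then b ord0 i
          else a ord0 i + (l - s)).

Lemma clamp_cube_sub (a b : 'rV[R]_d) l s : 0 <= s <= l ->
  cube (clamp_corner a b l s) s `<=` cube a l.
Proof.
move=> /andP[s0 sl] y Hy i; have := Hy i; rewrite /clamp_corner !mxE.
by case: (leP (b ord0 i) (a ord0 i)) => ba;
  try case: (leP (b ord0 i) (a ord0 i + (l - s))) => bal; lra.
Qed.

Lemma cubeI_sub_clamp (a b : 'rV[R]_d) m l : 0 < m -> 0 < l ->
  cube b m `&` cube a l `<=` cube (clamp_corner a b l (Num.min m l)) (Num.min m l).
Proof.
move=> m0 l0 y [Hb Ha] i; have := Hb i; have := Ha i; rewrite /clamp_corner !mxE.
rewrite minEle; case: (leP m l) => ml;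
  case: (leP (b ord0 i) (a ord0 i)) => ba;
  try case: (leP (b ord0 i) (a ord0 i + _)) => bal; lra.
Qed.

End subcube.

Section averages.
Variables (R : realType) (d : nat).
Local Open Scope ereal_scope.

Lemma intp_ge0 (A : set 'rV[R]_d) g : (forall x, 0 <= g x) -> 0 <= intp A g.
Proof. by move=> g0; apply: iint_ge0 => x; apply: mule_ge0; rewrite ?lee_fin. Qed.

Lemma eq_intp (A : set 'rV[R]_d) g1 g2 :
  (forall x, A x -> g1 x = g2 x) -> intp A g1 = intp A g2.
Proof.
move=> E; rewrite /intp; congr iint; apply/funext => x; rewrite indicE.
by case: (boolP (x \in A)) => [/set_mem /E ->|_]; rewrite ?mul0e.
Qed.

Lemma eq_ints (A : set 'rV[R]_d) g1 g2 :
  (forall x, A x -> g1 x = g2 x) -> ints A g1 = ints A g2.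
Proof.
move=> E; rewrite /ints (@eq_intp A (g1^\+) (g2^\+)) ?(@eq_intp A (g1^\-) (g2^\-)) //.
  by move=> x /E; rewrite !funenegE => ->.
by move=> x /E; rewrite !funeposE => ->.
Qed.

Lemma avgp_ge0 (A : set 'rV[R]_d) g : (forall x, 0 <= g x) -> 0 <= avgp A g.
Proof.
move=> g0; apply: mule_ge0; last exact: intp_ge0.
by rewrite lee_fin invr_ge0 fine_ge0 // intp_ge0.
Qed.

Lemma cube1_around (x : 'rV[R]_d) : is_cube (cube x 1) /\ cube x 1 x.
Proof. by split; [exists x, 1%R|move=> i; rewrite lexx /= lerDl ler01]. Qed.

Lemma HLM_ge0 f (x : 'rV[R]_d) : 0 <= HLM f x.
Proof.
apply: le_trans (ereal_sup_ubound _); last by exists (cube x 1) => //; exact: cube1_around.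
by apply: avgp_ge0 => y; rewrite lee_fin.
Qed.

Lemma M0_ge0 f (x : 'rV[R]_d) : 0 <= M0 f x.
Proof.
apply: le_trans (ereal_sup_ubound _); last by exists (cube x 1) => //; exact: cube1_around.
exact: expeR_ge0.
Qed.

Lemma Ainf_ge0 (w : 'rV[R]_d -> R) : (forall x, 0 <= w x)%R -> 0 <= Ainf w.
Proof.
move=> w0; apply: le_trans (ereal_sup_ubound _); last first.
  by exists (cube 0 1) => //; exact: (cube1_around 0).1.
by apply: mule_ge0; [apply: avgp_ge0 => y; rewrite lee_fin|exact: expeR_ge0].
Qed.

Lemma Lpnorm1 (g : 'rV[R]_d -> \bar R) : Lpnorm 1 g = iint (fun x => `|g x|).
Proof.
rewrite /Lpnorm invr1 poweRe1; last by apply: iint_ge0 => x; rewrite poweR_ge0.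
by congr iint; apply/funext => x; rewrite poweRe1 ?abse_ge0.
Qed.

Lemma maxe_logabs_le (y : R) : (0 <= y)%R -> maxe (logabs y) 0 <= y%:E.
Proof.
move=> y0; rewrite /logabs; have [->|yn0] := eqVneq y 0%R; first by rewrite maxNye.
have yp : (0 < y)%R by rewrite lt0r yn0.
by rewrite ger0_norm // ge_max !lee_fin y0 andbT ltW // ln_sublinear.
Qed.

Lemma le_mul_expeRN (u A : R) (z : \bar R) : (0 <= u)%R -> z != -oo ->
  u%:E * expeR z <= A%:E -> u%:E <= A%:E * expeR (- z).
Proof.
move=> u0; case: z => [r _|_|//] /=.
  rewrite -!EFinM !lee_fin => /(ler_wpM2r (expR_ge0 (- r))).
  by rewrite -mulrA -expRD subrr expR0 mulr1.
rewrite mule0; have [->|un0] := eqVneq u 0%R; first by rewrite mul0e.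
by rewrite gt0_muley ?lte_fin ?lt0r ?un0 // leNgt ltey.
Qed.

Lemma iint_abs_mul_indic (w : 'rV[R]_d -> R) (Q : set 'rV[R]_d) :
  (forall x, 0 <= w x)%R ->
  iint (fun x => `|(w x * \1_Q x)%:E|) = intp Q (fun x => (w x)%:E).
Proof.
move=> w0; congr iint; apply/funext => x.
by rewrite /= normrM mulrC !ger0_norm // EFinM.
Qed.

End averages.

Section Ainf_bound.
Variables (R : realType) (d : nat).
Local Open Scope ereal_scope.

Lemma weight_intp_fin (w : 'rV[R]_d -> R) (Q : set 'rV[R]_d) :
  weight w -> is_cube Q -> intp Q (fun y => (w y)%:E) \is a fin_num.
Proof.
move=> [_ w0 wint _] Qc; rewrite ge0_fin_numE ?wint //.
by apply: intp_ge0 => y; rewrite lee_fin.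
Qed.

Lemma avgp_le_Ainf (w : 'rV[R]_d -> R) (A : R) (P : set 'rV[R]_d) :
  weight w -> Ainf w = A%:E -> is_cube P ->
  avgp P (fun y => (w y)%:E) <= A%:E * expeR (avgs P (fun y => logabs (w y))).
Proof.
move=> hw HA Pc; have [_ w0 wint _] := hw; set h := fun y => logabs (w y).
have Wfin := weight_intp_fin hw Pc.
have Xfin : intp P h^\+ \is a fin_num.
  rewrite ge0_fin_numE; last by apply: intp_ge0 => y; exact: funepos_ge0.
  apply: le_lt_trans (wint _ Pc); apply: le_iint => y.
    by apply: mule_ge0; rewrite ?lee_fin ?funepos_ge0.
  by apply: lee_wpmul2l; rewrite ?lee_fin // funeposE maxe_logabs_le.
have Y0 : 0 <= intp P h^\- by apply: intp_ge0 => y; exact: funeneg_ge0.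
have avgsN : avgs P h = - avgs P (fun y => - h y).
  rewrite /avgs /ints -muleN (funeposN h) (funenegN h) oppeB 1?addeC //.
  by rewrite fin_num_adde_defl // fin_numN.
rewrite avgsN /avgp -(fineK Wfin) -EFinM; apply: le_mul_expeRN.
- by rewrite mulr_ge0 ?invr_ge0 ?fine_ge0 // intp_ge0.
- rewrite -ltNye /avgs /ints funeposN funenegN.
  apply: lt_le_trans (lee_wpmul2l _ (leeDr _ Y0)); last first.
    by rewrite lee_fin invr_ge0 fine_ge0 // intp_ge0.
  by rewrite -(fineK Xfin) -EFinN -EFinM ltNye.
- by rewrite EFinM (fineK Wfin) -HA; apply: ereal_sup_ubound; exists P.
Qed.

Lemma avgp_restrict_le (w : 'rV[R]_d -> R) (a b c : 'rV[R]_d) (l m s : R) :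
  (forall y, 0 <= w y)%R -> (0 < s)%R -> (s <= m)%R ->
  cube b m `&` cube a l `<=` cube c s ->
  avgp (cube b m) (fun y => (`|w y * \1_(cube a l) y|)%:E) <=
  avgp (cube c s) (fun y => (w y)%:E).
Proof.
move=> w0 s0 sm cap; have m0 : (0 < m)%R by exact: lt_le_trans sm.
rewrite /avgp !leb_cube //=; apply: lee_pmul.
- by rewrite lee_fin invr_ge0 exprn_ge0 // ltW.
- by apply: intp_ge0 => y; rewrite lee_fin.
- by rewrite lee_fin lef_pV2 ?posrE ?exprn_gt0 // lerXn2r // nnegrE ltW.
- apply: le_iint => y; first by rewrite -EFinM lee_fin mulr_ge0.
  rewrite -!EFinM lee_fin !indicE.
  case: (boolP (y \in cube b m)) => [yP|]; last by rewrite mul0r mulr_ge0.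
  case: (boolP (y \in cube a l)) => [yQ|]; last by rewrite mulr0 normr0 mulr0 mulr_ge0.
  rewrite mem_set; last by apply: cap; split; apply/set_mem.
  by rewrite !mul1r mulr1 ger0_norm.
Qed.

Lemma HLM_le_M0_restrict (w : 'rV[R]_d -> R) (A : R) (a x : 'rV[R]_d) (l : R) :
  weight w -> Ainf w = A%:E -> (0 < l)%R -> cube a l x ->
  HLM (fun y => w y * \1_(cube a l) y)%R x <=
  A%:E * M0 (fun y => w y * \1_(cube a l) y)%R x.
Proof.
move=> hw HA l0 xQ; have w0 : forall y, (0 <= w y)%R by case: hw.
have A0 : (0 <= A)%R by rewrite -lee_fin -HA Ainf_ge0.
apply: ge_ereal_sup => _ [P [[b [m [m0 ->]]] Px] <-].
set s := Num.min m l; set c := clamp_corner a b l s.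
have s0 : (0 < s)%R by rewrite lt_min m0.
have cap := @cubeI_sub_clamp _ _ a b m l m0 l0.
have sm : (s <= m)%R by rewrite ge_min lexx.
have sub : cube c s `<=` cube a l.
  by apply: clamp_cube_sub; rewrite (ltW s0) /= ge_min lexx orbT.
apply: le_trans (avgp_restrict_le w0 s0 sm cap) _.
have Pc : is_cube (cube c s) by exists c, s.
apply: le_trans (avgp_le_Ainf hw HA Pc) _.
apply: lee_wpmul2l; first by rewrite lee_fin.
rewrite /avgs (@eq_ints _ _ _ _ (fun y => logabs (w y * \1_(cube a l) y))); last first.
  by move=> y /sub yQ; rewrite indicE mem_set // mulr1.
by apply: ereal_sup_ubound; exists (cube c s) => //; split; last exact: cap.
Qed.

End Ainf_bound.

Lemma intp_HLM_le_M0 (R : realType) (d : nat) (w : 'rV[R]_d -> R) (A : R)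
    (a : 'rV[R]_d) (l : R) :
  weight w -> Ainf w = A%:E -> 0 < l ->
  (intp (cube a l) (HLM (fun y => (w y * \1_(cube a l) y)%R)) <=
   A%:E * iint (M0 (fun y => (w y * \1_(cube a l) y)%R)))%E.
Proof.
move=> hw HA l0; set g := fun y => w y * \1_(cube a l) y.
have A0 : 0 <= A by rewrite -lee_fin -HA Ainf_ge0 //; case: hw.
have M0Q y : (0 <= (\1_(cube a l) y)%:E * M0 g y)%E by rewrite mule_ge0 ?lee_fin ?M0_ge0.
apply: (@le_trans _ _ (iint (fun y => A%:E * ((\1_(cube a l) y)%:E * M0 g y)))%E).
  apply: le_iint => y; first by rewrite mule_ge0 ?lee_fin ?HLM_ge0.
  rewrite indicE; case: (boolP (y \in cube a l)) => [/set_mem yQ|_].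
    by rewrite !mul1e HLM_le_M0_restrict.
  by rewrite !mul0e mule0.
apply: le_trans (iintZl_le M0Q A0) _; apply: lee_wpmul2l; first by rewrite lee_fin.
apply: le_iint => // y; rewrite indicE; case: (y \in cube a l); first by rewrite mul1e.
by rewrite mul0e M0_ge0.
Qed.

Theorem proposition2p2 (R : realType) (d : nat) (c : R) :
  0 < c ->
  (forall (p : R) (f : 'rV[R]_d -> R), 0 < p -> borel_fun f ->
     (Lpnorm p (M0 f) <= (c `^ p^-1)%:E * Lpnorm p (fun x => (f x)%:E))%E) ->
  forall w : 'rV[R]_d -> R, weight w ->
  (Ainf' w <= c%:E * Ainf w)%E.
Proof.
move=> c0 M0_bound w hw; have [bw w0 _ _] := hw.
case/gee0P: (Ainf_ge0 w0) => [->|[A A0 HA]]; first by rewrite gt0_muley ?lte_fin ?leey.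
rewrite HA; apply: ge_ereal_sup => _ [Q Qc <-].
have /fineK WE := weight_intp_fin hw Qc; move: Qc WE => [a [l [l0 ->]]].
set W := fine _ => WE.
have [->|Wn0] := eqVneq W 0.
  by rewrite invr0 mul0e -EFinM lee_fin mulr_ge0 // ltW.
have W0 : 0 <= W by rewrite fine_ge0 // intp_ge0 // => y; rewrite lee_fin.
set g := fun y => w y * \1_(cube a l) y.
have M0g : (iint (M0 g) <= c%:E * W%:E)%E.
  have := M0_bound 1 g ltr01 (borel_fun_mul_indic bw (borel_cube a l)).
  rewrite !Lpnorm1 invr1 powRr1 ?(ltW c0) // iint_abs_mul_indic // -WE.
  suff -> : (fun x => `|M0 g x|)%E = M0 g by [].
  by apply/funext => x; rewrite gee0_abs ?M0_ge0.
have A0' : (0 <= A%:E)%E by rewrite lee_fin.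
have HLMg := le_trans (intp_HLM_le_M0 a hw HA l0) (lee_wpmul2l A0' M0g).
apply: le_trans (lee_wpmul2l _ HLMg) _; first by rewrite lee_fin invr_ge0.
by rewrite -!EFinM lee_fin (_ : W^-1 * (A * (c * W)) = c * A) //; field.
Qed.
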